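(* For each $i\in\{1,\dots,13\}$ and each $n$ for which the graph $G_i$ (defined in the context) is defined, $q(G_i)<q(K_{1,1,n-2}^+)$.
   Context: $q(G)$ denotes the largest eigenvalue of the signless Laplacian matrix $Q(G)=D(G)+A(G)$ ($A(G)$ adjacency matrix, $D(G)$ diagonal degree matrix). $K_{1,1,n-2}^+$ is obtained from the complete tripartite graph $K_{1,1,n-2}$ by adding one edge inside the part of size $n-2$. $K_4$ is the complete graph on 4 vertices. Define graphs $U_1,\dots,U_{12}$, each with two distinguished vertices $z,w$: - $U_1$: a 4-cycle $abcda$, plus $z$ and $w$ each adjacent to $a,b,c,d$ (6 vertices). - $U_2$: a 4-cycle $abcda$ plus the chord $ac$, plus $z$ adjacent to $a,b,c,d$ and $w$ adjacent to $b,d$ (6 vertices). - $U_3$ (resp. $U_4$): $U_1$ (resp. $U_2$) plus one new vertex adjacent only to $z$ (7 vertices). - $U_5$ (resp. $U_6$): $U_1$ (resp. $U_2$) plus a new triangle whose three vertices are all adjacent to $z$ (9 vertices). - $U_7$: a $K_4$ on $\{p,q,r,w\}$, a triangle $\{t_1,t_2,t_3\}$, and $z$ adjacent to $p,q,r,t_1,t_2,t_3$ (8 vertices). - $U_8$: a $K_4$ on $\{A,B,C,w\}$, a vertex $D$ adjacent to $w$, and $z$ adjacent to $A,B,C,D$ (6 vertices). - $U_9$: a triangle $acd$ plus a vertex $b$ adjacent to $d$, plus $z$ adjacent to $a,b,c,d$ and $w$ adjacent to $a,b,c$ (6 vertices). - $U_{10}$ (resp. $U_{11}$): $U_9$ plus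 one (resp. two) new vertices each adjacent exactly to $d$ and $z$ (7, resp. 8 vertices). - $U_{12}=U_{12}(n,s)$, $s\ge3$: a star $K_{1,s}$ with center $c$ and leaves $\ell_1,\dots,\ell_s$, plus $z$ adjacent to $c,\ell_1,\dots,\ell_s$ and $w$ adjacent to $\ell_1,\dots,\ell_s$ ($s+3$ vertices). For $i=1,\dots,11$, with $n\ge 7$ and $n-|V(U_i)|\equiv 0\pmod 4$, $G_i$ is the $n$-vertex graph obtained from $U_i$ together with $\frac{n-|V(U_i)|}{4}$ vertex-disjoint new copies of $K_4$ by adding all edges between $z$ and the vertices of these copies. $G_{12}=G_{12}(n,s)$ is obtained in the same way from $U_{12}(n,s)$ with $\frac{n-s-3}{4}$ copies of $K_4$, where $s\ge 3$, $n\ge s+7$ and $n-s-3\equiv 0\pmod 4$. $G_{13}$ is obtained from the complete bipartite graph $K_{3,n-3}$ by adding one edge inside the part of size $3$, where $n\ge 7$. *)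

From mathcomp Require Import all_boot all_order all_algebra.
From mathcomp.real_closed Require Import polyrcf.
Set Implicit Arguments. Unset Strict Implicit. Unset Printing Implicit Defensive.
Import Order.TTheory GRing.Theory Num.Theory.

(* A simple graph on vertex set {0,...,n-1} is given by a boolean adjacency
   function on nat (only its values on 'I_n matter).  All adjacency functions
   below are symmetric and irreflexive by construction. *)

Definition Qmat (R : nzRingType) (n : nat) (adj : nat -> nat -> bool) : 'M[R]_n :=
  \matrix_(i < n, j < n)
    (if i == j then (#|[set k : 'I_n | adj i k]|)%:R else (adj i j : nat)%:R)%R.

(* largest eigenvalue of a square matrix over a real closed field: the largest
   real root of its characteristic polynomial (rootsR is sorted increasingly
   and lists all real roots of a nonzero polynomial). *)
Definition lambda_max (R : rcfType) (n : nat) (A : 'M[R]_n) : R :=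
  last 0%R (rootsR (char_poly A)).

Definition q_sl (R : rcfType) (n : nat) (adj : nat -> nat -> bool) : R :=
  lambda_max (Qmat R n adj).

Definition adj_of_edges (E : seq (nat * nat)) (i j : nat) : bool :=
  (i != j) && (((i, j) \in E) || ((j, i) \in E)).

(* K_{1,1,n-2}^+ : parts {0}, {1}, {2,...,n-1}, plus the edge 2-3 *)
Definition Kplus_adj (i j : nat) : bool :=
  (i != j) &&
  ((i <= 1) || (j <= 1)
    || ((i == 2) && (j == 3)) || ((i == 3) && (j == 2))).

(* G_13 : K_{3,n-3} with parts {0,1,2}, {3,...,n-1}, plus the edge 0-1 *)
Definition G13_adj (i j : nat) : bool :=
  (i != j) &&
  (((i <= 2) && (3 <= j)) || ((j <= 2) && (3 <= i))
    || ((i == 0) && (j == 1)) || ((i == 1) && (j == 0))).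

(* The graph obtained from a graph U on vertices {0,...,m-1} (given by its
   edge list E) with distinguished vertex z = 0, together with vertex-disjoint
   copies of K_4 on the vertices {m+4t, m+4t+1, m+4t+2, m+4t+3}, by joining z
   to every vertex of these copies.  On 'I_n with n = m + 4k this is the graph
   with k copies of K_4. *)
Definition glue_adj (m : nat) (E : seq (nat * nat)) (i j : nat) : bool :=
  (i != j) &&
  (((i < m) && (j < m) && adj_of_edges E i j)
    || ((m <= i) && (m <= j) && ((i - m) %/ 4 == (j - m) %/ 4))
    || ((i == 0) && (m <= j)) || ((j == 0) && (m <= i))).

(* Vertex labels in U_i: z = 0, w = 1, other vertices 2,3,... *)
(* U_1: a=2,b=3,c=4,d=5 *)
Definition U1_edges : seq (nat * nat) :=
  [:: (2,3); (3,4); (4,5); (5,2);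
      (0,2); (0,3); (0,4); (0,5);
      (1,2); (1,3); (1,4); (1,5)].
(* U_2: a=2,b=3,c=4,d=5, chord ac, w adjacent to b,d *)
Definition U2_edges : seq (nat * nat) :=
  [:: (2,3); (3,4); (4,5); (5,2); (2,4);
      (0,2); (0,3); (0,4); (0,5);
      (1,3); (1,5)].
Definition pend_edges : seq (nat * nat) := [:: (0,6)].
Definition tri_edges : seq (nat * nat) :=
  [:: (6,7); (7,8); (6,8); (0,6); (0,7); (0,8)].
(* U_7: K_4 on {p,q,r,w} = {2,3,4,1}, triangle {5,6,7}, z adjacent to 2..7 *)
Definition U7_edges : seq (nat * nat) :=
  [:: (2,3); (2,4); (3,4); (1,2); (1,3); (1,4);
      (5,6); (6,7); (5,7);
      (0,2); (0,3); (0,4); (0,5); (0,6); (0,7)].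
(* U_8: K_4 on {A,B,C,w} = {2,3,4,1}, D = 5 adjacent to w, z adjacent to A,B,C,D *)
Definition U8_edges : seq (nat * nat) :=
  [:: (2,3); (2,4); (3,4); (1,2); (1,3); (1,4);
      (1,5);
      (0,2); (0,3); (0,4); (0,5)].
(* U_9: a=2,b=3,c=4,d=5; triangle acd, b~d, z ~ a,b,c,d, w ~ a,b,c *)
Definition U9_edges : seq (nat * nat) :=
  [:: (2,4); (4,5); (2,5); (3,5);
      (0,2); (0,3); (0,4); (0,5);
      (1,2); (1,3); (1,4)].

Definition U_edges (i : nat) : seq (nat * nat) :=
  match i with
  | 1 => U1_edges
  | 2 => U2_edges
  | 3 => U1_edges ++ pend_edges
  | 4 => U2_edges ++ pend_edges
  | 5 => U1_edges ++ tri_edges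
  | 6 => U2_edges ++ tri_edges
  | 7 => U7_edges
  | 8 => U8_edges
  | 9 => U9_edges
  | 10 => U9_edges ++ [:: (5,6); (0,6)]
  | 11 => U9_edges ++ [:: (5,6); (0,6); (5,7); (0,7)]
  | _ => [::]
  end.

Definition U_size (i : nat) : nat :=
  match i with
  | 1 | 2 | 8 | 9 => 6
  | 3 | 4 | 10 => 7
  | 7 | 11 => 8
  | 5 | 6 => 9
  | _ => 0
  end.

Definition G_adj (i : nat) : nat -> nat -> bool := glue_adj (U_size i) (U_edges i).

(* U_12(s): z=0, w=1, c=2, leaves 3,...,s+2 *)
Definition U12_adj (s i j : nat) : bool :=
  let leaf x := (3 <= x) && (x <= s + 2) in
  (i != j) &&
  (((i == 2) && leaf j) || ((j == 2) && leaf i)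
    || ((i == 0) && ((j == 2) || leaf j)) || ((j == 0) && ((i == 2) || leaf i))
    || ((i == 1) && leaf j) || ((j == 1) && leaf i)).

(* G_12(n,s) on vertices 'I_n: U_12(s) (s+3 vertices) plus copies of K_4
   on {s+3+4t,...,s+3+4t+3}, all joined to z = 0 *)
Definition G12_adj (s i j : nat) : bool :=
  let m := s + 3 in
  (i != j) &&
  (((i < m) && (j < m) && U12_adj s i j)
    || ((m <= i) && (m <= j) && ((i - m) %/ 4 == (j - m) %/ 4))
    || ((i == 0) && (m <= j)) || ((j == 0) && (m <= i))).

(* The spectral radius of each G_i is compared with n + 3/2 (with n + 7/4 for
   G_13 when n >= 11).  Upper bounds are Collatz-Wielandt bounds: if x > 0 and
   (Q x)_j < U x_j at every vertex j, no eigenvalue of Q reaches U.  The test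
   vectors give the hub z the weight n and all vertices of the glued copies of
   K_4 one common weight, so that each copy contributes the same inequality
   whatever the number of copies.  The lower bound for K_{1,1,n-2}^+ comes from an
   explicit eigenvector, whose eigenvalue is a root of a cubic located by the
   intermediate value theorem. *)

From mathcomp Require Import all_boot all_order all_algebra.
From mathcomp.real_closed Require Import polyrcf.
From mathcomp.algebra_tactics Require Import ring lra.
From mathcomp Require Import zify.
Set Implicit Arguments. Unset Strict Implicit. Unset Printing Implicit Defensive.
Import Order.TTheory GRing.Theory Num.Theory.
Local Open Scope ring_scope.

Section LargestEigenvalue.
Variables (R : rcfType) (n : nat).
Implicit Types (A : 'M[R]_n) (r U : R).

Lemma eigenvalue_le_lambda_max A r : eigenvalue A r -> r <= lambda_max A.
Proof.
rewrite eigenvalue_root_char /lambda_max => root_r.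
set s := rootsR _.
have r_in : r \in s.
  have := roots_on_rootsR (monic_neq0 (char_poly_monic A)) r.
  by rewrite root_r andbT => <-.
have s_gt0 : (0 < size s)%N by case: s r_in.
rewrite -nth_last -(nth_index 0 r_in).
rewrite (lt_sorted_leq_nth 0 (sorted_roots _ _ _)) ?inE ?index_mem ?prednK //.
by rewrite -ltnS prednK // index_mem.
Qed.

(* [0 < U] covers matrices without real eigenvalues, whose [lambda_max] is the
   default value 0. *)
Lemma lambda_max_lt A U :
  0 < U -> (forall r, eigenvalue A r -> r < U) -> lambda_max A < U.
Proof.
move=> U_gt0 ltU; rewrite /lambda_max.
have := mem_last 0 (rootsR (char_poly A)); rewrite inE => /orP[/eqP -> //|].
rewrite -(roots_on_rootsR (monic_neq0 (char_poly_monic A))) => /andP[_].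
by rewrite -eigenvalue_root_char; apply: ltU.
Qed.

(* Collatz-Wielandt: compare an eigenvector with x at the index where
   |v_i| / x_i is largest. *)
Lemma eigenvalue_lt_of_test_vector A (x : 'rV[R]_n) U r :
  (forall i j, 0 <= A i j) -> (forall j, 0 < x 0 j) ->
  (forall j, (x *m A) 0 j < U * x 0 j) ->
  eigenvalue A r -> `|r| < U.
Proof.
move=> A_ge0 x_gt0 xA_lt /eigenvalueP[v vA v_neq0].
have [j0 vj0_neq0] : exists j0, v 0 j0 != 0.
  apply/existsP; move: v_neq0; apply: contraR; rewrite negb_exists => /forallP v0.
  by apply/eqP/rowP => k; rewrite mxE; apply/eqP; rewrite -[_ == _]negbK v0.
pose y i := `|v 0 i| / x 0 i.
have [j _ y_max] := @arg_maxP _ _ _ j0 xpredT y isT.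
have v_eq i : `|v 0 i| = y i * x 0 i by rewrite /y divfK ?gt_eqF.
have yj_gt0 : 0 < y j.
  by apply: lt_le_trans (y_max j0 isT); rewrite divr_gt0 ?normr_gt0.
have vj_gt0 : 0 < `|v 0 j| by rewrite v_eq mulr_gt0.
rewrite -(ltr_pM2r vj_gt0) -normrM.
have -> : r * v 0 j = (v *m A) 0 j by rewrite vA !mxE.
apply: (@le_lt_trans _ _ (y j * (x *m A) 0 j)).
  rewrite !mxE mulr_sumr; apply: le_trans (ler_norm_sum _ _ _) _.
  apply: ler_sum => i _; rewrite normrM (ger0_norm (A_ge0 i j)) mulrA.
  apply: ler_wpM2r => //; rewrite v_eq.
  by apply: ler_wpM2r; [exact: ltW | exact: y_max].
by rewrite v_eq mulrCA ltr_pM2l.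
Qed.

End LargestEigenvalue.

Definition Qmul {R : nzRingType} (n : nat) (adj : nat -> nat -> bool) (x : nat -> R)
    (j : nat) : R :=
  \sum_(0 <= i < n) (adj j i)%:R * (x j + x i).

Section SignlessLaplacian.
Variables (R : rcfType) (n : nat) (adj : nat -> nat -> bool).
Hypotheses (adj_sym : forall i j, adj i j = adj j i) (adj_irr : forall i, adj i i = false).

Lemma mulmx_Qmat (x : nat -> R) (j : 'I_n) :
  (\row_(i < n) x i *m Qmat R n adj) 0 j = Qmul n adj x j.
Proof.
have deg_j : #|[set k : 'I_n | adj j k]|%:R = \sum_(i < n) (adj j i)%:R :> R.
  by rewrite -sum1_card natr_sum big_mkcond; apply: eq_bigr => i _; rewrite inE; case: adj.
rewrite mxE /Qmul big_mkord.
under eq_bigr => i _ do rewrite !mxE.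
under [RHS]eq_bigr => i _ do rewrite mulrDr.
rewrite big_split /= -mulr_suml -deg_j (bigD1 j) //= eqxx.
congr (_ + _); first exact: mulrC.
rewrite [RHS](bigD1 j) //= adj_irr mul0r add0r.
by apply: eq_bigr => i /negPf ->; rewrite adj_sym mulrC.
Qed.

Lemma q_sl_lt (x : nat -> R) U :
  0 < U -> (forall j, (j < n)%N -> 0 < x j) ->
  (forall j, (j < n)%N -> Qmul n adj x j < U * x j) ->
  q_sl R n adj < U.
Proof.
move=> U_gt0 x_gt0 Qx_lt; apply: lambda_max_lt => // r eig_r.
apply: le_lt_trans (ler_norm r) _.
apply: (eigenvalue_lt_of_test_vector (x := \row_(i < n) x i) _ _ _ eig_r).
- by move=> i j; rewrite mxE; case: ifP.
- by move=> j; rewrite mxE x_gt0.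
- by move=> j; rewrite mulmx_Qmat mxE Qx_lt.
Qed.

Lemma q_sl_ge (v : nat -> R) r :
  (exists2 j, (j < n)%N & v j != 0) ->
  (forall j, (j < n)%N -> Qmul n adj v j = r * v j) ->
  r <= q_sl R n adj.
Proof.
move=> [j0 j0_lt vj0_neq0] Qv; apply: eigenvalue_le_lambda_max.
apply/eigenvalueP; exists (\row_(i < n) v i).
  by apply/rowP => j; rewrite mulmx_Qmat Qv // !mxE.
apply/eqP => /rowP /(_ (Ordinal j0_lt)); rewrite !mxE => vj0.
by rewrite vj0 eqxx in vj0_neq0.
Qed.

End SignlessLaplacian.

Lemma sum_nat_eq_const (R : nzRingType) (a b : nat) (F : nat -> R) (c : R) :
  (forall i, (a <= i < b)%N -> F i = c) -> \sum_(a <= i < b) F i = c *+ (b - a).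
Proof. by move=> Fc; rewrite -sumr_const_nat; apply: eq_big_nat. Qed.

Lemma sum_block4_neq (R : nzRingType) (a j : nat) (c : R) :
  (a <= j < a + 4)%N -> \sum_(a <= i < a + 4) (i != j)%:R * c = c *+ 3.
Proof.
move=> j_in; rewrite -{1}[a]add0n big_addn addKn.
have [r r_lt ->] : exists2 r, (r < 4)%N & j = (r + a)%N by exists (j - a)%N; lia.
under eq_bigr => i _ do rewrite eqn_add2r.
rewrite !big_nat_recl // big_geq //.
by case: r r_lt => [|[|[|[|]]]] // _; rewrite /= ?mul0r ?mul1r ?add0r ?addr0 !mulrS mulr0n addr0.
Qed.

(* [glue_adj m E] is [glueK4 m (adj_of_edges E)] and [G12_adj s] is
   [glueK4 (s + 3) (U12_adj s)], both by conversion. *)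
Definition glueK4 (m : nat) (A : nat -> nat -> bool) (i j : nat) : bool :=
  (i != j) &&
  (((i < m) && (j < m) && A i j)
    || ((m <= i) && (m <= j) && ((i - m) %/ 4 == (j - m) %/ 4))
    || ((i == 0) && (m <= j)) || ((j == 0) && (m <= i)))%N.

Lemma glueK4_sym m A : (forall i j, A i j = A j i) -> forall i j, glueK4 m A i j = glueK4 m A j i.
Proof. by move=> A_sym i j; rewrite /glueK4 A_sym; lia. Qed.

Lemma glueK4_irr m A i : glueK4 m A i i = false.
Proof. by rewrite /glueK4 eqxx. Qed.

Lemma glueK4_U m A i j : (i < m)%N -> (j < m)%N -> glueK4 m A i j = (i != j) && A i j.
Proof.
move=> i_lt j_lt; rewrite /glueK4 i_lt j_lt !(leqNgt m) i_lt j_lt /=.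
by rewrite !andbF !orbF.
Qed.

Section GlueK4Rows.
Variables (R : rcfType) (m n : nat) (A : nat -> nat -> bool).
Variables (x : nat -> R) (al : R).
Hypotheses (m_gt0 : (0 < m)%N) (m_le_n : (m <= n)%N).
Hypothesis x_clique : forall i, (m <= i)%N -> x i = al.

Lemma Qmul_glueK4_U j : (j < m)%N ->
  Qmul n (glueK4 m A) x j =
    \sum_(0 <= i < m) (glueK4 m A j i)%:R * (x j + x i)
    + (j == 0%N)%:R * (x 0%N + al) * (n - m)%:R.
Proof.
move=> j_lt; rewrite /Qmul (big_cat_nat (leq0n m) m_le_n) /=; congr (_ + _).
rewrite (sum_nat_eq_const (c := (j == 0%N)%:R * (x 0%N + al))) ?mulr_natr //.
move=> i /andP[m_le_i _]; rewrite (x_clique m_le_i).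
have -> : glueK4 m A j i = (j == 0%N) by rewrite /glueK4; lia.
by case: (eqVneq j 0%N) => [->|_]; rewrite ?mul0r ?mul1r.
Qed.

Lemma Qmul_glueK4_clique j : ((n - m) %% 4 = 0)%N -> (m <= j < n)%N ->
  Qmul n (glueK4 m A) x j = x 0%N + al *+ 7.
Proof.
move=> n_mod /andP[m_le_j j_lt].
set k := ((j - m) %/ 4)%N.
have lo : (m <= m + 4 * k)%N by lia.
have mid : (m + 4 * k <= m + 4 * k + 4)%N by lia.
have hi : (m + 4 * k + 4 <= n)%N by rewrite /k; lia.
rewrite /Qmul (big_cat_nat (leq0n m) m_le_n) (big_cat_nat lo (leq_trans mid hi)).
rewrite (big_cat_nat mid hi) /= big_ltn // x_clique //.
have -> : glueK4 m A j 0 by rewrite /glueK4; lia.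
rewrite (sum_nat_eq_const (a := 1) (c := 0)); last first.
  move=> i i_in; have -> : glueK4 m A j i = false by rewrite /glueK4; lia.
  exact: mul0r.
rewrite (sum_nat_eq_const (a := m) (c := 0)); last first.
  move=> i i_in; have -> : glueK4 m A j i = false.
    by rewrite /glueK4 /k in i_in *; lia.
  exact: mul0r.
rewrite (sum_nat_eq_const (a := m + 4 * k + 4) (c := 0)); last first.
  move=> i i_in; have -> : glueK4 m A j i = false.
    by rewrite /glueK4 /k in i_in *; lia.
  exact: mul0r.
have block : \sum_(m + 4 * k <= i < m + 4 * k + 4) (glueK4 m A j i)%:R * (al + x i)
    = (al + al) *+ 3.
  rewrite -(@sum_block4_neq _ (m + 4 * k) j); last by rewrite /k; lia.
  apply: eq_big_nat => i i_in; rewrite x_clique; last lia.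
  by congr (_%:R * _); rewrite /glueK4 /k in i_in *; lia.
rewrite block !mul0rn mul1r !addr0 add0r addrC.
by rewrite !mulrS mulr0n; ring.
Qed.

End GlueK4Rows.

Lemma glueK4_q_lt (R : rcfType) m n A (L : seq R) (al U : R) :
  (forall i j, A i j = A j i) -> (0 < m)%N -> size L = m -> (m <= n)%N ->
  ((n - m) %% 4 = 0)%N -> 0 < U -> 0 < al ->
  (forall k, (k < m)%N -> 0 < nth al L k) ->
  (forall j, (j < m)%N ->
     \sum_(0 <= i < m) (glueK4 m A j i)%:R * (nth al L j + nth al L i)
     + (j == 0%N)%:R * (nth al L 0 + al) * (n - m)%:R < U * nth al L j) ->
  ((m + 4 <= n)%N -> nth al L 0 + al *+ 7 < U * al) ->
  q_sl R n (glueK4 m A) < U.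
Proof.
move=> A_sym m_gt0 size_L m_le_n n_mod U_gt0 al_gt0 L_gt0 U_rows clique_row.
have x_clique i : (m <= i)%N -> nth al L i = al.
  by move=> m_le_i; rewrite nth_default // size_L.
apply: (@q_sl_lt R n _ _ _ (nth al L) U U_gt0).
- exact: glueK4_sym.
- exact: glueK4_irr.
- move=> j _; have [/L_gt0 //|m_le_j] := ltnP j m.
  by rewrite x_clique.
move=> j j_lt; have [j_lt_m|m_le_j] := ltnP j m.
  by rewrite (Qmul_glueK4_U A m_gt0 m_le_n x_clique) ?U_rows.
rewrite (Qmul_glueK4_clique A m_gt0 m_le_n x_clique) ?m_le_j // (x_clique j m_le_j).
by apply: clique_row; lia.
Qed.

Lemma adj_of_edges_sym E i j : adj_of_edges E i j = adj_of_edges E j i.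
Proof. by rewrite /adj_of_edges eq_sym orbC. Qed.

Definition G_bound (R : rcfType) (i : nat) : Prop :=
  forall n, (7 <= n)%N -> (U_size i <= n)%N -> ((n - U_size i) %% 4 = 0)%N ->
  q_sl R n (G_adj i) < n%:R + 3 / 2.

(* Entry k is the weight of vertex k of U_i; entry 0 is the hub z. *)
Definition G_test_vector (R : rcfType) (N : R) (i : nat) : seq R :=
  match i with
  | 1 => [:: N; 7/4; 11/4; 11/4; 11/4; 11/4]
  | 2 => [:: N; 3/4; 3; 11/4; 3; 11/4]
  | 3 => [:: N; 5; 11/2; 11/2; 11/2; 11/2; 1]
  | 4 => [:: N; 3/2; 11/2; 19/4; 11/2; 19/4; 1]
  | 5 => [:: N; 11/4; 7/2; 7/2; 7/2; 7/2; 2; 2; 2]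
  | 6 => [:: N; 1; 15/4; 13/4; 15/4; 13/4; 2; 2; 2]
  | 7 => [:: N; 9/4; 17/4; 17/4; 17/4; 9/4; 9/4; 9/4]
  | 8 => [:: N; 3/2; 11/4; 11/4; 11/4; 3/2]
  | 9 => [:: N; 1; 11/4; 2; 11/4; 11/4]
  | 10 => [:: N; 5/2; 5; 13/4; 5; 7; 9/4]
  | 11 => [:: N; 2; 9/2; 3; 9/2; 8; 9/4; 9/4]
  | _ => [::]
  end.

Definition G_clique_weight {R : rcfType} (i : nat) : R :=
  match i with 5 | 6 | 7 | 11 => 2 | _ => 5/2 end.

(* Turns [forall j, j < m -> P j], for a numeral m <= 9, into P 0, ..., P (m - 1). *)
Ltac case_below9 :=
  let j := fresh "j" in move=> j; case: j => [|[|[|[|[|[|[|[|[|j]]]]]]]]] //= _.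

Ltac G_bound_by_test_vector :=
  rewrite /G_bound [U_size _]/= => n ? ? ?;
  lazymatch goal with
  | _ : ((?n - ?m) %% 4 = 0)%N |- is_true (q_sl ?R ?n (G_adj ?i) < _) =>
    (have ? : 7 <= n%:R :> R by rewrite (ler_nat R 7));
    (have ? : m%:R <= n%:R :> R by rewrite ler_nat);
    (* n >= 10 follows exactly when |V(U_i)| = 6, and is needed there. *)
    try (have ? : 10 <= n%:R :> R by rewrite (ler_nat R 10); lia);
    apply: (@glueK4_q_lt R m n _ (G_test_vector n%:R i) (@G_clique_weight R i));
    [ exact: adj_of_edges_sym | by [] | by [] | by [] | by [] | lra | rewrite /=; lra
    | case_below9; lra
    | case_below9; rewrite natrB // !big_nat_recl // big_geq //= /glueK4 /adj_of_edges /=; lra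
    | rewrite -(ler_nat R) natrD /= => ?; lra ]
  end.

Lemma G1_q_lt (R : rcfType) : G_bound R 1. Proof. G_bound_by_test_vector. Qed.
Lemma G2_q_lt (R : rcfType) : G_bound R 2. Proof. G_bound_by_test_vector. Qed.
Lemma G3_q_lt (R : rcfType) : G_bound R 3. Proof. G_bound_by_test_vector. Qed.
Lemma G4_q_lt (R : rcfType) : G_bound R 4. Proof. G_bound_by_test_vector. Qed.
Lemma G5_q_lt (R : rcfType) : G_bound R 5. Proof. G_bound_by_test_vector. Qed.
Lemma G6_q_lt (R : rcfType) : G_bound R 6. Proof. G_bound_by_test_vector. Qed.
Lemma G7_q_lt (R : rcfType) : G_bound R 7. Proof. G_bound_by_test_vector. Qed.
Lemma G8_q_lt (R : rcfType) : G_bound R 8. Proof. G_bound_by_test_vector. Qed.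
Lemma G9_q_lt (R : rcfType) : G_bound R 9. Proof. G_bound_by_test_vector. Qed.
Lemma G10_q_lt (R : rcfType) : G_bound R 10. Proof. G_bound_by_test_vector. Qed.
Lemma G11_q_lt (R : rcfType) : G_bound R 11. Proof. G_bound_by_test_vector. Qed.

Lemma G_adj_q_lt (R : rcfType) i : (1 <= i <= 11)%N -> G_bound R i.
Proof.
case/andP; case: i => [|[|[|[|[|[|[|[|[|[|[|[|i]]]]]]]]]]]] // _ _.
- exact: G1_q_lt.
- exact: G2_q_lt.
- exact: G3_q_lt.
- exact: G4_q_lt.
- exact: G5_q_lt.
- exact: G6_q_lt.
- exact: G7_q_lt.
- exact: G8_q_lt.
- exact: G9_q_lt.
- exact: G10_q_lt.
- exact: G11_q_lt.
Qed.

Ltac decide_rel rel unfold_rel :=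
  repeat match goal with |- context [rel ?i ?j] =>
    let b := fresh in
    first [ have b : rel i j = true by unfold_rel; lia
          | have b : rel i j = false by unfold_rel; lia ];
    rewrite b; clear b
  end.

Section G12.
Variables (R : rcfType) (s n : nat).
Hypotheses (s_ge3 : (3 <= s)%N) (n_ge : (s + 7 <= n)%N).
Let N : R := n%:R.
Let S : R := s%:R.
Let x : nat -> R := nth 3 [:: N, S / 4, (N + 2 * S) / 7 & nseq s 2].

Lemma G12_U_row j : (j < s + 3)%N ->
  \sum_(0 <= i < s + 3) (glueK4 (s + 3) (U12_adj s) j i)%:R * (x j + x i)
  + (j == 0%N)%:R * (x 0%N + 3) * (n - (s + 3))%:R < (N + 3 / 2) * x j.
Proof.
move=> j_lt.
have S_ge3 : 3 <= S by rewrite (ler_nat R 3).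
have NS : S + 7 <= N by rewrite -(natrD R s 7) ler_nat.
have S_gap : 0 <= S * (N - S - 7) by rewrite mulr_ge0 //; lra.
have NS_gap : 0 <= (N + 2 * S) * (N - S - 7) by rewrite mulr_ge0 //; lra.
have x_leaf i : (3 <= i < s + 3)%N -> x i = 2.
  by case: i => [|[|[|i]]] // i_in; rewrite /x /= nth_nseq; case: ifP => //; lia.
under eq_big_nat => i /andP[_ i_lt] do rewrite glueK4_U // /U12_adj andbA andbb -/(U12_adj s j i).
have leaf_sum :
    \sum_(3 <= i < s + 3) (U12_adj s j i)%:R * (x j + x i) = (j < 3)%N%:R * (x j + 2) * S.
  rewrite (sum_nat_eq_const (c := (j < 3)%N%:R * (x j + 2))) ?addnK ?mulr_natr //.
  move=> i i_in; rewrite (x_leaf i i_in).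
  by have -> : U12_adj s j i = (j < 3)%N by rewrite /U12_adj; lia.
rewrite (@big_cat_nat _ _ _ 3) //; last lia.
rewrite leaf_sum !big_nat_recl // big_geq // natrB ?natrD; last lia.
case: j j_lt {leaf_sum} => [|[|[|k]]] k_lt;
  decide_rel (U12_adj s) ltac:(rewrite /U12_adj);
  rewrite /x /=; try lra.
by rewrite nth_nseq (_ : (k < s)%N); [lra | lia].
Qed.

Lemma G12_q_lt : ((n - s - 3) %% 4 = 0)%N -> q_sl R n (G12_adj s) < N + 3 / 2.
Proof.
move=> n_mod.
have S_ge3 : 3 <= S by rewrite (ler_nat R 3).
have NS : S + 7 <= N by rewrite -(natrD R s 7) ler_nat.
apply: (@glueK4_q_lt R (s + 3) n (U12_adj s) [:: N, S / 4, (N + 2 * S) / 7 & nseq s 2] 3).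
- by move=> i j; rewrite /U12_adj; lia.
- by rewrite addn3.
- by rewrite /= size_nseq addn3.
- lia.
- by rewrite subnDA.
- lra.
- lra.
- move=> [|[|[|k]]] k_lt /=; try lra.
  by rewrite nth_nseq; case: ifP; lra.
- exact: G12_U_row.
- rewrite -(ler_nat R) natrD /= => ?; lra.
Qed.

End G12.

Definition Kplus_cubic {R : rcfType} (N t : R) : R :=
  (t - N) * (t - 4) * (t - 2) - 4 * (t - 2) - 2 * (N - 4) * (t - 4).

(* The eigenvector is constant on the orbits {0,1}, {2,3}, {4,...,n-1} of
   the automorphism group, with values 1, 2/(t-4), 2/(t-2); eliminating
   these values from the eigenvalue equations leaves Kplus_cubic n t = 0. *)
Lemma Kplus_cubic_root_le (R : rcfType) n (t : R) :
  (4 <= n)%N -> 4 < t -> Kplus_cubic n%:R t = 0 -> t <= q_sl R n Kplus_adj.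
Proof.
move=> n_ge4 t_gt4 cubic_t.
have t4 : t - 4 != 0 by apply: lt0r_neq0; lra.
have t2 : t - 2 != 0 by apply: lt0r_neq0; lra.
pose v i : R := if (i < 2)%N then 1 else if (i < 4)%N then 2 / (t - 4) else 2 / (t - 2).
apply: (@q_sl_ge R n Kplus_adj _ _ v).
- by move=> i j; rewrite /Kplus_adj; lia.
- by move=> i; rewrite /Kplus_adj eqxx.
- by exists 0%N; [lia | rewrite /v /= oner_neq0].
move=> j j_lt; rewrite /Qmul (@big_cat_nat _ _ _ 4) //.
have far_sum : \sum_(4 <= i < n) (Kplus_adj j i)%:R * (v j + v i)
    = (j < 2)%N%:R * (v j + 2 / (t - 2)) * (n%:R - 4).
  rewrite (sum_nat_eq_const (c := (j < 2)%N%:R * (v j + 2 / (t - 2)))).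
    by rewrite -(mulr_natr _ (n - 4)) natrB.
  move=> i i_in; have -> : Kplus_adj j i = (j < 2)%N by rewrite /Kplus_adj; lia.
  have [i_ge2 i_ge4] : (i < 2)%N = false /\ (i < 4)%N = false by lia.
  by rewrite /v i_ge2 i_ge4.
rewrite far_sum !big_nat_recl // big_geq //=.
case: j j_lt {far_sum} => [|[|[|[|j]]]] j_lt;
  decide_rel Kplus_adj ltac:(rewrite /Kplus_adj); rewrite /v /=.
1,2: rewrite [LHS](_ : _ = t - Kplus_cubic n%:R t / ((t - 4) * (t - 2)));
       [by rewrite cubic_t mul0r subr0 mulr1 | by rewrite /Kplus_cubic; field; rewrite t4 t2].
all: by field; rewrite ?t4 ?t2.
Qed.

Lemma Kplus_q_ge (R : rcfType) n (t : R) :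
  (5 <= n)%N -> 4 < t -> t <= n%:R + 2 -> Kplus_cubic n%:R t <= 0 ->
  t <= q_sl R n Kplus_adj.
Proof.
move=> n_ge5 t_gt4 t_le cubic_t.
have N_ge5 : 5 <= n%:R :> R by rewrite (ler_nat R 5).
pose p : {poly R} := ('X - n%:R%:P) * ('X - 4%:P) * ('X - 2%:P)
   - 4%:P * ('X - 2%:P) - (2 * (n%:R - 4))%:P * ('X - 4%:P).
have pE u : p.[u] = Kplus_cubic n%:R u by rewrite /p /Kplus_cubic !hornerE.
have [lam /andP[t_le_lam _] /rootP] : exists2 lam, t <= lam <= n%:R + 2 & root p lam.
  by apply: poly_ivt => //; rewrite !pE cubic_t /= /Kplus_cubic; lra.
rewrite pE => cubic_lam.
have lam_gt4 : 4 < lam by lra.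
exact: le_trans t_le_lam (Kplus_cubic_root_le (ltnW n_ge5) lam_gt4 cubic_lam).
Qed.

Lemma Kplus_q_ge_3half (R : rcfType) n : (7 <= n)%N -> n%:R + 3 / 2 <= q_sl R n Kplus_adj.
Proof.
move=> n_ge7; have N_ge7 : 7 <= n%:R :> R by rewrite (ler_nat R 7).
apply: Kplus_q_ge; rewrite /Kplus_cubic; try lia; nra.
Qed.

Lemma Kplus_q_ge_7quarter (R : rcfType) n : (11 <= n)%N -> n%:R + 7 / 4 <= q_sl R n Kplus_adj.
Proof.
move=> n_ge11; have N_ge11 : 11 <= n%:R :> R by rewrite (ler_nat R 11).
apply: Kplus_q_ge; rewrite /Kplus_cubic; try lia; nra.
Qed.

Lemma G13_q_lt (R : rcfType) n (a b c U : R) :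
  (3 <= n)%N -> 0 < a -> 0 < b -> 0 < c -> 0 < U ->
  a + a + (a + c) * (n%:R - 3) < U * a ->
  (b + c) * (n%:R - 3) < U * b ->
  (c + a) + (c + a) + (c + b) < U * c ->
  q_sl R n G13_adj < U.
Proof.
move=> n_ge3 a_gt0 b_gt0 c_gt0 U_gt0 row01 row2 row_far.
pose x i : R := if (i < 2)%N then a else if i == 2 then b else c.
apply: (@q_sl_lt R n G13_adj _ _ x U U_gt0).
- by move=> i j; rewrite /G13_adj; lia.
- by move=> i; rewrite /G13_adj eqxx.
- by move=> j _; rewrite /x; case: ifP => _ //; case: ifP.
move=> j j_lt; rewrite /Qmul (@big_cat_nat _ _ _ 3) //.
rewrite !big_nat_recl // big_geq //=.
have far_sum : \sum_(3 <= i < n) (G13_adj j i)%:R * (x j + x i)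
    = (j < 3)%N%:R * (x j + c) * (n%:R - 3).
  rewrite (sum_nat_eq_const (c := (j < 3)%N%:R * (x j + c))).
    by rewrite -(mulr_natr _ (n - 3)) natrB.
  move=> i i_in; have -> : G13_adj j i = (j < 3)%N by rewrite /G13_adj; lia.
  have [i_ge2 i_neq2] : (i < 2)%N = false /\ (i == 2) = false by lia.
  by rewrite /x i_ge2 i_neq2.
rewrite far_sum.
case: j j_lt {far_sum} => [|[|[|j]]] j_lt;
  decide_rel G13_adj ltac:(rewrite /G13_adj); rewrite /x /=; lra.
Qed.

(* n + 3/2 does not bound q(G_13) for large n, while Kplus_cubic certifies
   q(K_{1,1,n-2}^+) >= n + 7/4 only from n = 11 on. *)
Lemma G13_lt_Kplus (R : rcfType) n : (7 <= n)%N -> q_sl R n G13_adj < q_sl R n Kplus_adj.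
Proof.
move=> n_ge7; have N_ge7 : 7 <= n%:R :> R by rewrite (ler_nat R 7).
have [n_le10 | n_gt10] := leqP n 10.
  have N_le10 : n%:R <= 10 :> R by rewrite (ler_nat R n 10).
  apply: lt_le_trans _ (Kplus_q_ge_3half R n_ge7).
  by apply: (@G13_q_lt R n (n%:R - 3) (11 / 20 * (n%:R - 3)) (12 / 5)); [lia | lra ..].
apply: lt_le_trans _ (Kplus_q_ge_7quarter R n_gt10).
by apply: (@G13_q_lt R n (n%:R - 3) (3 / 5 * (n%:R - 3)) (27 / 10)); [lia | lra ..].
Qed.

Theorem lemma2p9 (R : rcfType) :
  (forall (i n : nat), (1 <= i <= 11)%N -> (7 <= n)%N -> (U_size i <= n)%N ->
     ((n - U_size i) %% 4 = 0)%N ->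
     q_sl R n (G_adj i) < q_sl R n Kplus_adj)
  /\ (forall (s n : nat), (3 <= s)%N -> (s + 7 <= n)%N -> ((n - s - 3) %% 4 = 0)%N ->
     q_sl R n (G12_adj s) < q_sl R n Kplus_adj)
  /\ (forall n : nat, (7 <= n)%N ->
     q_sl R n G13_adj < q_sl R n Kplus_adj).
Proof.
split; [|split].
- move=> i n i_range n_ge7 m_le_n n_mod.
  apply: lt_le_trans _ (Kplus_q_ge_3half R n_ge7).
  exact: G_adj_q_lt.
- move=> s n s_ge3 n_ge n_mod.
  apply: lt_le_trans _ (@Kplus_q_ge_3half R n _); last lia.
  exact: G12_q_lt.
- exact: G13_lt_Kplus.
Qed.
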